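(* Let $n,p\ge1$. For each $i\in\{1,\dots,n\}$, $\lambda_i(\delta_{(n,p)})=0$, and for each $j\in\{1,\dots,p\}$, $\rho_j(\delta_{(n,p)})=0$.
   Context: Work over a field of characteristic $0$. $F_{(m,q)}$ is the Lie algebra generated by $x_{i,j}$, $(i,j)\in\{1,\dots,m\}\times\{1,\dots,q\}$, with defining relations $[x_{i,j},x_{i',j'}]=0$ whenever $i\ne i'$ and $j\ne j'$ (quotient of the free Lie algebra); it is graded by total degree ($\deg x_{i,j}=1$) and $\widehat F_{(m,q)}$ is its completion. $\lambda_i:\widehat F_{(n,p)}\to\widehat F_{(n-1,p)}$ is the continuous Lie algebra morphism with $x_{i',j'}\mapsto x_{i',j'}$ if $i'<i$, $\mapsto0$ if $i'=i$, $\mapsto x_{i'-1,j'}$ if $i'>i$; $\rho_j:\widehat F_{(n,p)}\to\widehat F_{(n,p-1)}$ is the continuous Lie morphism with $x_{i',j'}\mapsto x_{i',j'}$ if $j'<j$, $\mapsto0$ if $j'=j$, $\mapsto x_{i',j'-1}$ if $j'>j$. For elements of positive valuation, $y_1\star\cdots\star y_N$ denotes the Campbell–Baker–Hausdorff series with $\exp(y_1\star\cdots\star y_N)=\exp(y_1)\cdots\exp(y_N)$ (empty product $=0$). Define $$\delta_{(n,p)}=\sum_{k=0}^n\sum_{l=0}^p\sum_{\substack{1\le i_1<\cdots<i_k\le n\\1\le j_1<\cdots<j_l\le p}}(-1)^{n+p-k-l}(x_{i_1,j_1}\star\cdots\star x_{i_1,j_l})\star\cdots\star(x_{i_k,j_1}\star\cdots\star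 x_{i_k,j_l})\in\widehat{F}_{(n,p)}.$$ *)

From HB Require Import structures.
From Stdlib Require Import Relation_Operators.
From mathcomp Require Import all_boot all_order all_algebra.
From mathcomp Require Import boolp.
Set Implicit Arguments. Unset Strict Implicit. Unset Printing Implicit Defensive.
Import Order.TTheory GRing.Theory.
Local Open Scope ring_scope.

(* Letters x_{i,j} of F_(m,q) are indexed (0-based) by 'I_m * 'I_q.
   A (completed) series is a function from words to coefficients; this is the
   completed free associative algebra on the letters, in which the completed
   Lie algebras and the CBH series live. *)
Definition letter (m q : nat) := ('I_m * 'I_q)%type.
Definition word (m q : nat) := seq (letter m q).
Definition ser (R : fieldType) (m q : nat) := word m q -> R.

Section Series.
Variables (R : fieldType) (m q : nat).
Local Notation S := (ser R m q).

Definition sadd (f g : S) : S := fun w => f w + g w.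
Definition sscale (c : R) (f : S) : S := fun w => c * f w.
Definition sone : S := fun w => (w == [::])%:R.
Definition smul (f g : S) : S :=
  fun w => \sum_(k < (size w).+1) f (take k w) * g (drop k w).
Definition spow (f : S) (k : nat) : S := iter k (smul f) sone.
(* exp f = sum_k f^k/k! ; for f without constant term only k <= |w|
   contribute to the coefficient of w. *)
Definition sexp (f : S) : S :=
  fun w => \sum_(k < (size w).+1) spow f k w / (k`!)%:R.
(* log g = sum_{k>=1} (-1)^(k+1) (g-1)^k / k, for g with constant term 1 *)
Definition slog (g : S) : S :=
  let h := sadd g (sscale (-1) sone) in
  fun w => \sum_(1 <= k < (size w).+1) (-1) ^+ k.+1 * spow h k w / k%:R.
(* y_1 * ... * y_N (CBH): log (exp y_1 ... exp y_N); empty product = 0 *)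
Definition star (ys : seq S) : S :=
  slog (foldr (fun y acc => smul (sexp y) acc) sone ys).
Definition gen (a : 'I_m) (b : 'I_q) : S := fun w => (w == [:: (a, b)])%:R.

Definition commute_letters (a b : letter m q) : bool :=
  (a.1 != b.1) && (a.2 != b.2).
Definition swap_step (u v : word m q) : Prop :=
  exists s t a b, commute_letters a b /\ u = s ++ a :: b :: t /\ v = s ++ b :: a :: t.
Definition trace_eq (u v : word m q) : Prop := clos_refl_trans _ swap_step u v.

(* Image of a series in the completed enveloping algebra of F_(m,q)
   (free assoc. algebra modulo [x_{i,j},x_{i',j'}] = 0, i<>i', j<>j'),
   whose basis is the set of trace classes: coefficient of the class of w. *)
Definition trace_proj (f : S) : S :=
  fun w => \sum_(v <- permutations w | `[< trace_eq w v >]) f v.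
End Series.

Definition delta (R : fieldType) (n p : nat) : ser R n p :=
  fun w => \sum_(I : {set 'I_n}) \sum_(J : {set 'I_p})
     (-1) ^+ (n + p - #|I| - #|J|) *
     star [seq star [seq gen R i j | j <- enum J] | i <- enum I] w.

(* lambda_i : completed F_(n+1,q) -> F_(n,q), killing row i and shifting
   rows above i down; as continuous algebra morphism on series. *)
Definition lam (R : fieldType) (n q : nat) (i : 'I_n.+1) (f : ser R n.+1 q)
  : ser R n q := fun w => f [seq (lift i ab.1, ab.2) | ab <- w].
(* rho_j : completed F_(m,p+1) -> F_(m,p), killing column j. *)
Definition rho (R : fieldType) (m p : nat) (j : 'I_p.+1) (f : ser R m p.+1)
  : ser R m p := fun w => f [seq (ab.1, lift j ab.2) | ab <- w].

(* Substituting letters is a continuous algebra morphism of series, so it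
   commutes with exp, log and hence with the CBH product; lambda_i and rho_j
   are such substitutions, and they kill the generators of row i (resp.
   column j).  Since exp 0 = 1, a zero factor may be dropped from a CBH
   product, so after applying lambda_i the summand of delta indexed by
   (I, J) depends on I only through I \ {i}.  The summands for I and I + {i}
   then carry opposite signs and cancel: lambda_i(delta) is already zero as a
   series, before projecting to the enveloping algebra of F_(n,p); likewise
   for rho_j. *)
From mathcomp Require Import all_boot all_order all_algebra.
From mathcomp Require Import boolp.
Set Implicit Arguments. Unset Strict Implicit. Unset Printing Implicit Defensive.
Import GRing.Theory.
Local Open Scope ring_scope.

Definition szero {R : fieldType} {m q : nat} : ser R m q := fun _ => 0.

Section Comap.
Variables (R : fieldType) (m q m' q' : nat) (phi : letter m' q' -> letter m q).

Definition scomap (F : ser R m q) : ser R m' q' := fun w => F (map phi w).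

Lemma scomap_sone : scomap (@sone R m q) = @sone R m' q'.
Proof. by apply: funext => -[]. Qed.

Lemma scomap_sadd F G : scomap (sadd F G) = sadd (scomap F) (scomap G).
Proof. by []. Qed.

Lemma scomap_sscale c F : scomap (sscale c F) = sscale c (scomap F).
Proof. by []. Qed.

Lemma scomap_smul F G : scomap (smul F G) = smul (scomap F) (scomap G).
Proof.
apply: funext => w; rewrite /scomap /smul size_map.
by apply: eq_bigr => k _; rewrite map_take map_drop.
Qed.

Lemma scomap_spow F k : scomap (spow F k) = spow (scomap F) k.
Proof. by elim: k => [|k IHk] /=; rewrite ?scomap_sone // scomap_smul IHk. Qed.

Lemma scomap_sexp F : scomap (sexp F) = sexp (scomap F).
Proof.
apply: funext => w; rewrite /scomap /sexp size_map.
by apply: eq_bigr => k _; rewrite -scomap_spow.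
Qed.

Lemma scomap_slog F : scomap (slog F) = slog (scomap F).
Proof.
apply: funext => w; rewrite /scomap /slog size_map; apply: eq_bigr => k _.
by rewrite -[spow _ k _]/(scomap (spow _ k) w) scomap_spow scomap_sadd
  scomap_sscale scomap_sone.
Qed.

Lemma scomap_star ys : scomap (star ys) = star (map scomap ys).
Proof.
rewrite /star scomap_slog; congr slog.
by elim: ys => [|y ys IHys] /=; rewrite ?scomap_sone // scomap_smul scomap_sexp IHys.
Qed.

Lemma scomap_gen_eq0 a b : (forall l, phi l != (a, b)) ->
  scomap (gen R a b) = szero.
Proof.
move=> phi_neq; apply: funext => -[|l [|l' w]] //=;
  by rewrite /scomap /gen /= eqseq_cons ?(negbTE (phi_neq l)) ?andbF.
Qed.

End Comap.

Section ZeroFactor.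
Variables (R : fieldType) (m q : nat).
Local Notation S := (ser R m q).
Local Notation one := (@sone R m q).

Lemma smul0l (F : S) : smul szero F = szero.
Proof. by apply: funext => w; apply: big1 => k _; rewrite mul0r. Qed.

Lemma smul1l (F : S) : smul one F = F.
Proof.
apply: funext => w; rewrite /smul big_ord_recl /one take0 drop0 eqxx mul1r.
by rewrite big1 ?addr0 // => k _; case: w => [|a w] in k *; [case: k | rewrite mul0r].
Qed.

Lemma sexp0 : sexp (szero : S) = one.
Proof.
apply: funext => w; rewrite /sexp big_ord_recl divr1.
by rewrite big1 ?addr0 // => k _; rewrite /= smul0l mul0r.
Qed.

Lemma slog1 : slog one = (szero : S).
Proof.
have sone_sub1 : sadd one (sscale (-1) one) = szero.
  by apply: funext => v; rewrite /sadd /sscale mulN1r subrr.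
apply: funext => w; rewrite /slog sone_sub1 big_nat big1 // => -[|k] // _.
by rewrite /= smul0l mulr0 mul0r.
Qed.

Lemma star_nil : star [::] = (szero : S).
Proof. exact: slog1. Qed.

Lemma star_map_filter (T : Type) (G : T -> S) (P : pred T) s :
  (forall x, ~~ P x -> G x = szero) -> star (map G s) = star (map G (filter P s)).
Proof.
move=> G0; rewrite /star; congr slog.
elim: s => [|x s IHs] //=; case: (boolP (P x)) => Px /=; rewrite IHs //.
by rewrite G0 // sexp0 smul1l.
Qed.

Lemma star_map_eq0 (T : Type) (G : T -> S) s :
  (forall x, G x = szero) -> star (map G s) = szero.
Proof. by move=> G0; rewrite (@star_map_filter _ _ pred0) ?filter_pred0 ?star_nil. Qed.

Lemma star_map_enum_setD1 (T : finType) (G : T -> S) (I : {set T}) i :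
  G i = szero -> star (map G (enum I)) = star (map G (enum (I :\ i))).
Proof.
move=> Gi0; have enum_setD1 : enum (I :\ i) = [seq a <- enum I | a != i].
  by rewrite /enum_mem -filter_predI; apply: eq_filter => a; rewrite !inE.
by rewrite enum_setD1 -(@star_map_filter _ _ (predC1 i)) // => a /negPn /eqP ->.
Qed.

Definition star_grid (A B : finType) (g : A -> B -> S) (I : {set A}) (J : {set B})
  : S := star [seq star [seq g a b | b <- enum J] | a <- enum I].

Lemma star_grid_setD1l (A B : finType) (g : A -> B -> S) I J i :
  (forall b, g i b = szero) -> star_grid g I J = star_grid g (I :\ i) J.
Proof. by move=> gi0; apply: star_map_enum_setD1; apply: star_map_eq0. Qed.

Lemma star_grid_setD1r (A B : finType) (g : A -> B -> S) I J j :
  (forall a, g a j = szero) -> star_grid g I J = star_grid g I (J :\ j).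
Proof.
by move=> gj0; congr star; apply: eq_map => a; apply: star_map_enum_setD1.
Qed.

End ZeroFactor.

Lemma scomap_star_grid (R : fieldType) m q m' q' (phi : letter m' q' -> letter m q)
    (A B : finType) (g : A -> B -> ser R m q) I J :
  scomap phi (star_grid g I J) = star_grid (fun a b => scomap phi (g a b)) I J.
Proof.
rewrite /star_grid scomap_star -map_comp; congr star.
by apply: eq_map => a /=; rewrite scomap_star -map_comp.
Qed.

Lemma scomap_delta (R : fieldType) n p m q (phi : letter m q -> letter n p) :
  scomap phi (@delta R n p) = fun w => \sum_(I : {set 'I_n}) \sum_(J : {set 'I_p})
    (-1) ^+ (n + p - #|I| - #|J|) *
    star_grid (fun a b => scomap phi (gen R a b)) I J w.
Proof.
apply: funext => w; apply: eq_bigr => I _; apply: eq_bigr => J _.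
by rewrite -scomap_star_grid.
Qed.

Lemma alternating_sum_setD1_eq0 (R : pzRingType) (T : finType) (i : T) (N : nat)
    (F : {set T} -> R) :
  (#|T| <= N)%N -> (forall I, F I = F (I :\ i)) ->
  \sum_(I : {set T}) (-1) ^+ (N - #|I|) * F I = 0.
Proof.
move=> le_T_N FD1; rewrite (bigID (fun I : {set T} => i \in I)) /=.
rewrite (reindex_onto (fun I => i |: I) (fun I => I :\ i)) => [|I]; last exact: setD1K.
have inU1_eq I : (i \in i |: I) && ((i |: I) :\ i == I) = (i \notin I).
  rewrite setU11 /=; case: (boolP (i \in I)) => [iI | /setU1K ->]; last exact: eqxx.
  by apply/negbTE/eqP => /setP/(_ i); rewrite !inE eqxx iI.
rewrite (eq_bigl _ _ inU1_eq) -big_split big1 //= => I iNI.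
have lt_I_N : (#|I| < N)%N.
  by move: (max_card (i |: I)); rewrite cardsU1 iNI add1n => /leq_trans; apply.
rewrite cardsU1 iNI add1n [F (i |: I)]FD1 setU1K // -(subnSK lt_I_N) exprS.
by rewrite mulN1r mulNr addrN.
Qed.

Section Restrictions.
Variables (R : fieldType) (n p : nat).

Lemma lam_delta (i : 'I_n.+1) : lam i (@delta R n.+1 p) = szero.
Proof.
set g := fun a b => scomap (fun l : letter n p => (lift i l.1, l.2)) (gen R a b).
have gi0 b : g i b = szero.
  apply: scomap_gen_eq0 => l; apply/eqP => -[/eqP].
  by rewrite eq_sym (negbTE (neq_lift _ _)).
apply: funext => w; rewrite -[LHS]/(scomap _ _ w) scomap_delta exchange_big /=.
apply: big1 => J _; under eq_bigr => I _ do rewrite subnAC.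
apply: (@alternating_sum_setD1_eq0 _ _ i (n.+1 + p - #|J|)
          (fun I => star_grid g I J w)) => [|I].
  by rewrite card_ord -addnBA ?leq_addr // -[X in (_ <= X)%N](card_ord p) max_card.
by rewrite (star_grid_setD1l _ _ gi0).
Qed.

Lemma rho_delta (j : 'I_p.+1) : rho j (@delta R n p.+1) = szero.
Proof.
set g := fun a b => scomap (fun l : letter n p => (l.1, lift j l.2)) (gen R a b).
have gj0 a : g a j = szero.
  apply: scomap_gen_eq0 => l; apply/eqP => -[_ /eqP].
  by rewrite eq_sym (negbTE (neq_lift _ _)).
apply: funext => w; rewrite -[LHS]/(scomap _ _ w) scomap_delta /=.
apply: big1 => I _; apply: (@alternating_sum_setD1_eq0 _ _ j (n + p.+1 - #|I|)
                             (fun J => star_grid g I J w)) => [|J].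
  by rewrite card_ord -addnBAC ?leq_addl // -[X in (_ <= X)%N](card_ord n) max_card.
by rewrite (star_grid_setD1r _ _ gj0).
Qed.

End Restrictions.

Theorem lemma1p5 (R : fieldType) (hR : [pchar R] =i pred0) (n p : nat) :
  (forall (i : 'I_n.+1) (w : word n p.+1),
      trace_proj (lam i (@delta R n.+1 p.+1)) w = 0) /\
  (forall (j : 'I_p.+1) (w : word n.+1 p),
      trace_proj (rho j (@delta R n.+1 p.+1)) w = 0).
Proof.
split=> [i | j] w; rewrite /trace_proj big1 // => v _.
  by rewrite lam_delta.
by rewrite rho_delta.
Qed.
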